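(* Let $a>0$, $\mu=p/q\in(0,1)$ with $p,q$ coprime, and consider $u_t+au_x=0$ on the periodic domain $[0,1)$ with 1-periodic initial function $u_0\in C^0([0,1])$. For each $m\in\mathbb{N}$ with $N=\frac{1}{\mu h}\in\mathbb{N}$, $h=1/m$, choose $\delta=\delta(h)$ with $0<\delta<h/q$, and initialize the nonlinear jet scheme by $$\phi_j^0=\hat\phi_j+\frac{\hat\phi_{j+1}-\hat\phi_j}{h}\,\delta,\qquad \psi_j^0=\frac{\hat\phi_{j+1}-\hat\phi_j}{h},\qquad \hat\phi_j=u_0(x_j),$$ (indices mod $m$), i.e. $\phi_j^0=I(x_j+\delta)$, $\psi_j^0=I'(x_j+\delta)$ where $I$ is the continuous periodic piecewise linear interpolant of the data $(x_j,\hat\phi_j)$. Let $\boldsymbol U^{h,t_n}$ be the state after $n$ jet scheme steps ($t_n=n\Delta t$, $\Delta t=\mu h/a$), and let $\varepsilon^{h,t_n}=\|\mathcal{I}(\boldsymbol U^{h,t_n})-u(\cdot,t_n)\|_{L^1([0,1])}$, where $u(x,t_n)=u_0(x-at_n \bmod 1)$. Then $\mathcal{I}(\boldsymbol U^{h,0})(x)=I(x+\delta)$, for all $n$ one has $\mathcal{I}(\boldsymbol U^{h,t_n})(x)=\mathcal{I}(\boldsymbol U^{h,0})(x-n\mu h\bmod 1)$, and $$\sup_{n\ge0}\varepsilon^{h,t_n}\le \omega(u_0,h)+\omega(u_0,\delta).$$ Consequently the scheme has the commuting limits property $$\lim_{h\to0}\limsup_{n\to\infty}\varepsilon^{h,t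_n}=0=\limsup_{n\to\infty}\lim_{h\to0}\varepsilon^{h,t_n}.$$
   Context: Grid $x_j=jh$, $j=1,\dots,m$, on the periodic domain. State vector $\boldsymbol U=(\phi_1,\psi_1,\dots,\phi_m,\psi_m)\in\mathbb{R}^{2m}$. Nonlinear jet scheme interpolant $\mathcal{I}(\boldsymbol U)$: on each cell $[x_j,x_{j+1}]$ let $L_L(x)=\phi_j+\psi_j(x-x_j)$, $L_R(x)=\phi_{j+1}+\psi_{j+1}(x-x_{j+1})$; if $\psi_j\ne\psi_{j+1}$ and their intersection point $x_k$ lies in $(x_j,x_{j+1})$, set $\mathcal{I}(\boldsymbol U)=L_L$ on $[x_j,x_k]$ and $=L_R$ on $(x_k,x_{j+1}]$; otherwise use the linear interpolant $\phi_j+\frac{\phi_{j+1}-\phi_j}{h}(x-x_j)$ on the cell. One jet scheme step: $\boldsymbol U\mapsto\mathcal{E}(\mathcal{A}\,\mathcal{I}(\boldsymbol U))$, where $\mathcal{A}f(x)=f(x-\mu h)$ is the periodic shift by $a\Delta t$ and $\mathcal{E}f=(f(x_1),f'(x_1),\dots,f(x_m),f'(x_m))$ with left-sided derivatives taken at kinks; equivalently, $\phi_j^{n+1}=P(x_j-\mu h)$, $\psi_j^{n+1}=P'(x_j-\mu h)$ with $P=\mathcal{I}(\boldsymbol U^{h,t_n})$. The modulus of continuity is $\omega(u_0,r)=\sup\{|u_0(x)-u_0(y)|:x,y\in[0,1],\ |x-y|<r\}$. The commuting-limits identity is understood with $h=1/m$ ranging over those $m$ for which $N\in\mathbb{N}$,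 and exact arithmetic is assumed. *)

From Stdlib Require Import Reals ZArith Lra.
From Coquelicot Require Import Coquelicot.
Open Scope R_scope.

(* fractional part: frac x in [0,1), frac x = x - floor x *)
Definition frac (x : R) : R := x - IZR (up x - 1).

(* A state vector U = (phi_i, psi_i), stored as a function of the node index
   i, where node i sits at x_i = i h; indices are always used modulo m
   (node 0 is the node x_m = 1, periodically identified with 0). *)
Definition state := nat -> R * R.

Section Jet.
Variables (m : nat).
Let h : R := / INR m.

(* For a real z, the cell containing z seen from the left: integer k with
   k h < z <= (k+1) h, i.e. k = ceil(z/h) - 1, and local coordinate
   s = z - k h in (0,h]. *)
Definition cellk (z : R) : Z := (- up (- (z / h)))%Z.
Definition locs (z : R) : R := z - IZR (cellk z) * h.
Definition nodeL (z : R) : nat := Z.to_nat (Z.modulo (cellk z) (Z.of_nat m)).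
Definition nodeR (z : R) : nat := Z.to_nat (Z.modulo (cellk z + 1) (Z.of_nat m)).

(* kink point (local coordinate) of L_L(s) = phL + psL s and
   L_R(s) = phR + psR (s - h); it is only used when psL <> psR *)
Definition kinkpt (phL psL phR psR : R) : R := (phR - psR * h - phL) / (psL - psR).
Definition has_kink (phL psL phR psR : R) : bool :=
  if Req_EM_T psL psR then false
  else if Rlt_dec 0 (kinkpt phL psL phR psR) then
         if Rlt_dec (kinkpt phL psL phR psR) h then true else false
       else false.

Definition piece_val (phL psL phR psR s : R) : R :=
  if has_kink phL psL phR psR then
    (if Rle_dec s (kinkpt phL psL phR psR) then phL + psL * s
     else phR + psR * (s - h))
  else phL + (phR - phL) / h * s.

Definition piece_lslope (phL psL phR psR s : R) : R :=
  if has_kink phL psL phR psR then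
    (if Rle_dec s (kinkpt phL psL phR psR) then psL else psR)
  else (phR - phL) / h.

Definition jetI (U : state) (z : R) : R :=
  piece_val (fst (U (nodeL z))) (snd (U (nodeL z)))
            (fst (U (nodeR z))) (snd (U (nodeR z))) (locs z).

Definition jetI_lderiv (U : state) (z : R) : R :=
  piece_lslope (fst (U (nodeL z))) (snd (U (nodeL z)))
               (fst (U (nodeR z))) (snd (U (nodeR z))) (locs z).

Definition jet_step (mu : R) (U : state) : state :=
  fun i => (jetI U (INR i * h - mu * h), jetI_lderiv U (INR i * h - mu * h)).

Definition jet_iter (mu : R) (U0 : state) (n : nat) : state :=
  Nat.iter n (jet_step mu) U0.

Definition lin_interp (u0 : R -> R) (z : R) : R :=
  u0 (INR (nodeL z) * h)
  + (u0 (INR (nodeR z) * h) - u0 (INR (nodeL z) * h)) / h * locs z.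

Definition jet_init (u0 : R -> R) (delta : R) : state :=
  fun i => (u0 (INR i * h) + (u0 (INR (S i) * h) - u0 (INR i * h)) / h * delta,
            (u0 (INR (S i) * h) - u0 (INR i * h)) / h).

End Jet.

Definition exact_sol (u0 : R -> R) (a x t : R) : R := u0 (frac (x - a * t)).

(* error eps^{h,t_n} = || I(U^{h,t_n}) - u(., t_n) ||_{L^1([0,1])},
   with h = 1/m, t_n = n dt, dt = mu h / a *)
Definition jet_err (a mu : R) (u0 : R -> R) (delta : R) (m n : nat) : R :=
  RInt (fun x => Rabs (jetI m (jet_iter m mu (jet_init m u0 delta) n) x
                       - exact_sol u0 a x (INR n * (mu * / INR m / a)))) 0 1.

Definition omega (u0 : R -> R) (r : R) : Rbar :=
  Lub_Rbar (fun v => exists x y, 0 <= x <= 1 /\ 0 <= y <= 1 /\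
                      Rabs (x - y) < r /\ v = Rabs (u0 x - u0 y)).

Definition admissible (mu : R) (m : nat) : Prop :=
  (0 < m)%nat /\ exists N : nat, INR N = 1 / (mu * / INR m).

From Stdlib Require Import Reals ZArith Lra Lia.
From Coquelicot Require Import Coquelicot.
Open Scope R_scope.

(* For an offset c, let S_c be the state whose node values are the values and
   slopes of the continuous piecewise-linear interpolant I of u0 at the
   shifted nodes x_j + c.  When c is not a grid point, the jet interpolant of
   S_c is exactly the translate I(. + c) (jet_shifted_state): on every cell
   the two tangent lines of S_c are the two linear pieces of I meeting at the
   grid point inside the cell, and that grid point is the kink.  Hence one jet
   step maps S_c to S_(c - mu h), the initial state is S_delta, and since
   delta - n mu h never lies on the grid when 0 < delta < h/q
   (offset_off_grid), the scheme transports I(. + delta) without any error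
   (jet_exact_transport).  The L^1 error is therefore the L^1 norm of
   I(y + delta) - u0(y), which is bounded pointwise by omega(h) + omega(delta)
   (translated_interp_error); the commuting limits follow since omega(r)
   tends to 0 with r by uniform continuity of u0 on [0,1]. *)

Section Periodicity.
Variable u0 : R -> R.
Hypothesis Hper : forall x, u0 (x + 1) = u0 x.

Lemma periodic_nat (n : nat) (x : R) : u0 (x + INR n) = u0 x.
Proof.
  induction n as [|n IH]; [simpl; now rewrite Rplus_0_r|].
  rewrite S_INR. replace (x + (INR n + 1)) with ((x + INR n) + 1) by ring.
  now rewrite Hper.
Qed.

Lemma periodic_int (n : Z) (x : R) : u0 (x + IZR n) = u0 x.
Proof.
  destruct (Z_le_gt_dec 0 n).
  - rewrite <- (Z2Nat.id n), <- INR_IZR_INZ by lia. apply periodic_nat.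
  - rewrite <- (periodic_nat (Z.to_nat (- n)) (x + IZR n)).
    rewrite INR_IZR_INZ, Z2Nat.id, opp_IZR by lia. f_equal; ring.
Qed.

End Periodicity.

Section Grid.
Variable m : nat.
Hypothesis Hm : (0 < m)%nat.
Let h := / INR m.

Lemma INR_m_pos : 0 < INR m.
Proof. now apply lt_0_INR. Qed.

Lemma h_pos : 0 < h.
Proof. apply Rinv_0_lt_compat, INR_m_pos. Qed.

Lemma m_mul_h : INR m * h = 1.
Proof. unfold h; field. apply Rgt_not_eq, INR_m_pos. Qed.

Lemma h_le_1 : h <= 1.
Proof.
  assert (1 <= INR m) by (apply (le_INR 1); lia).
  unfold h; rewrite <- Rinv_1. apply Rinv_le_contravar; lra.
Qed.

Lemma cellk_unique (y : R) (K : Z) :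
  IZR K * h < y <= IZR (K + 1) * h -> cellk m y = K.
Proof.
  intros [H1 H2]. unfold cellk.
  replace (y / / INR m) with (y * INR m) by (field; apply Rgt_not_eq, INR_m_pos).
  assert (Hh := h_pos). assert (Hmh := m_mul_h). rewrite plus_IZR in H2.
  assert (A1 : IZR K < y * INR m).
  { apply Rmult_lt_reg_r with h; [exact Hh|]. rewrite Rmult_assoc, Hmh. lra. }
  assert (A2 : y * INR m <= IZR K + 1).
  { apply Rmult_le_reg_r with h; [exact Hh|]. rewrite Rmult_assoc, Hmh. lra. }
  rewrite <- (tech_up (- (y * INR m)) (- K)); rewrite ?opp_IZR; lra || lia.
Qed.

Lemma cell_decomp (y : R) :
  y = IZR (cellk m y) * h + locs m y /\ 0 < locs m y <= h.
Proof.
  unfold locs, cellk. fold h.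
  replace (y / h) with (y * INR m) by (unfold h; field; apply Rgt_not_eq, INR_m_pos).
  destruct (archimed (- (y * INR m))) as [H1 H2]. rewrite opp_IZR.
  assert (Hh := h_pos). assert (Hmh := m_mul_h).
  assert (Ey : y = y * INR m * h) by (rewrite Rmult_assoc, Hmh; ring).
  split; [ring|]. split.
  - rewrite Ey at 1. nra.
  - rewrite Ey at 1. nra.
Qed.

Lemma cell_within_01 (z : R) : 0 < z <= 1 ->
  0 <= IZR (cellk m z) * h /\ IZR (cellk m z + 1) * h <= 1.
Proof.
  intros Hz. destruct (cell_decomp z) as [Ez Ht]. set (K := cellk m z) in *.
  assert (Hh := h_pos). assert (Hmh := m_mul_h).
  assert (K0 : (0 <= K)%Z).
  { assert (Q : 0 < IZR (K + 1)) by (rewrite plus_IZR in *; nra). apply lt_IZR in Q. lia. }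
  assert (K1 : (K + 1 <= Z.of_nat m)%Z).
  { assert (Q : IZR K < IZR (Z.of_nat m)) by (rewrite <- INR_IZR_INZ; nra).
    apply lt_IZR in Q. lia. }
  apply IZR_le in K0. apply IZR_le in K1. rewrite <- INR_IZR_INZ in K1. split; nra.
Qed.

Lemma node_value (K : Z) :
  INR (Z.to_nat (K mod Z.of_nat m)) * h = IZR K * h - IZR (K / Z.of_nat m).
Proof.
  assert (B := Z.mod_pos_bound K (Z.of_nat m) ltac:(lia)).
  rewrite INR_IZR_INZ, Z2Nat.id by lia.
  rewrite (Z.div_mod K (Z.of_nat m)) at 2 by lia.
  rewrite plus_IZR, mult_IZR, <- INR_IZR_INZ.
  replace ((INR m * IZR (K / Z.of_nat m) + IZR (K mod Z.of_nat m)) * h)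
    with (IZR (K / Z.of_nat m) * (INR m * h) + IZR (K mod Z.of_nat m) * h) by ring.
  rewrite m_mul_h. ring.
Qed.

Lemma node_lt (K : Z) : (Z.to_nat (K mod Z.of_nat m) < m)%nat.
Proof. assert (B := Z.mod_pos_bound K (Z.of_nat m) ltac:(lia)). lia. Qed.

Lemma shift_by_int (K : Z) (t : R) (n : Z) :
  IZR K * h + t + IZR n = IZR (K + Z.of_nat m * n) * h + t.
Proof.
  rewrite plus_IZR, mult_IZR, <- INR_IZR_INZ.
  replace ((IZR K + INR m * IZR n) * h) with (IZR K * h + IZR n * (INR m * h)) by ring.
  rewrite m_mul_h. ring.
Qed.

End Grid.

Section Interpolant.
Variable u0 : R -> R.
Hypothesis Hper : forall x, u0 (x + 1) = u0 x.
Variable m : nat.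
Hypothesis Hm : (0 < m)%nat.
Let h := / INR m.

Definition grid_val (K : Z) : R := u0 (IZR K * h).
Definition grid_slope (K : Z) : R := (grid_val (K + 1) - grid_val K) / h.

Definition slope_interp (y : R) : R :=
  (u0 (INR (nodeR m y) * h) - u0 (INR (nodeL m y) * h)) / h.

Lemma grid_val_node (K : Z) : u0 (INR (Z.to_nat (K mod Z.of_nat m)) * h) = grid_val K.
Proof.
  unfold h. rewrite node_value by exact Hm. unfold grid_val, Rminus.
  rewrite <- opp_IZR. now apply periodic_int.
Qed.

Lemma grid_val_periodic (K n : Z) : grid_val (K + Z.of_nat m * n) = grid_val K.
Proof.
  unfold grid_val. rewrite <- (Rplus_0_r (IZR (K + _) * h)). unfold h.
  rewrite <- shift_by_int, Rplus_0_r by exact Hm. now apply periodic_int.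
Qed.

Lemma grid_slope_periodic (K n : Z) : grid_slope (K + Z.of_nat m * n) = grid_slope K.
Proof.
  unfold grid_slope.
  replace (K + Z.of_nat m * n + 1)%Z with ((K + 1) + Z.of_nat m * n)%Z by ring.
  now rewrite !grid_val_periodic.
Qed.

Lemma grid_slope_mul (K : Z) : grid_slope K * h = grid_val (K + 1) - grid_val K.
Proof. unfold grid_slope. field. apply Rgt_not_eq, h_pos, Hm. Qed.

Lemma lin_interp_cell (K : Z) (t : R) : 0 < t <= h ->
  lin_interp m u0 (IZR K * h + t) = grid_val K + grid_slope K * t.
Proof.
  intros Ht. assert (C : cellk m (IZR K * h + t) = K).
  { apply cellk_unique; [exact Hm|]. rewrite plus_IZR. fold h. lra. }
  unfold lin_interp, nodeL, nodeR, locs. rewrite C. fold h.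
  rewrite !grid_val_node. unfold grid_slope. f_equal. f_equal. ring.
Qed.

Lemma slope_interp_cell (K : Z) (t : R) : 0 < t <= h ->
  slope_interp (IZR K * h + t) = grid_slope K.
Proof.
  intros Ht. assert (C : cellk m (IZR K * h + t) = K).
  { apply cellk_unique; [exact Hm|]. rewrite plus_IZR. fold h. lra. }
  unfold slope_interp, nodeL, nodeR. rewrite C, !grid_val_node. reflexivity.
Qed.

Lemma lin_interp_periodic (y : R) (n : Z) : lin_interp m u0 (y + IZR n) = lin_interp m u0 y.
Proof.
  destruct (cell_decomp m Hm y) as [E Ht]. fold h in E, Ht.
  rewrite E. unfold h. rewrite shift_by_int by exact Hm. fold h.
  rewrite !lin_interp_cell by exact Ht. unfold grid_slope.
  replace (cellk m y + Z.of_nat m * n + 1)%Z with ((cellk m y + 1) + Z.of_nat m * n)%Z by ring.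
  now rewrite !grid_val_periodic.
Qed.

Lemma slope_interp_periodic (y : R) (n : Z) : slope_interp (y + IZR n) = slope_interp y.
Proof.
  destruct (cell_decomp m Hm y) as [E Ht]. fold h in E, Ht.
  rewrite E. unfold h. rewrite shift_by_int by exact Hm. fold h.
  rewrite !slope_interp_cell by exact Ht. apply grid_slope_periodic.
Qed.

End Interpolant.

Section Transport.
Variable u0 : R -> R.
Hypothesis Hper : forall x, u0 (x + 1) = u0 x.
Variable m : nat.
Hypothesis Hm : (0 < m)%nat.
Let h := / INR m.

Definition shifted_state (c : R) : state :=
  fun i => (lin_interp m u0 (INR i * h + c), slope_interp u0 m (INR i * h + c)).

Lemma jetI_agree (U1 U2 : state) : (forall i, (i < m)%nat -> U1 i = U2 i) ->
  forall z, jetI m U1 z = jetI m U2 z /\ jetI_lderiv m U1 z = jetI_lderiv m U2 z.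
Proof.
  intros H z. unfold jetI, jetI_lderiv, nodeL, nodeR.
  rewrite !H by (apply node_lt, Hm). split; reflexivity.
Qed.

(* A cell whose endpoint data are the tangent lines of a function that is
   linear with slope A up to the point h - r and with slope B after it: the
   kink of the jet interpolant is h - r, so the jet interpolant reproduces
   that function. *)
Lemma piece_before_kink (V A B r s : R) : 0 < r < h -> 0 < s -> r + s <= h ->
  piece_val m (V + A * r) A (V + A * h + B * r) B s = V + A * (r + s) /\
  piece_lslope m (V + A * r) A (V + A * h + B * r) B s = A.
Proof.
  intros Hr Hs Hrs. unfold piece_val, piece_lslope, has_kink. fold h.
  destruct (Req_EM_T A B) as [<-|HAB].
  - split; field; lra.
  - replace (kinkpt m (V + A * r) A (V + A * h + B * r) B) with (h - r)
      by (unfold kinkpt; fold h; field; intro; apply HAB; lra).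
    destruct (Rlt_dec 0 (h - r)); [|lra]. destruct (Rlt_dec (h - r) h); [|lra].
    destruct (Rle_dec s (h - r)); [|lra]. split; ring.
Qed.

Lemma piece_after_kink (V A B r s : R) : 0 < r < h -> h < r + s ->
  piece_val m (V + A * r) A (V + A * h + B * r) B s = V + A * h + B * (r + s - h) /\
  piece_lslope m (V + A * r) A (V + A * h + B * r) B s = B.
Proof.
  intros Hr Hrs. assert (Hh : h <> 0) by lra.
  unfold piece_val, piece_lslope, has_kink. fold h.
  destruct (Req_EM_T A B) as [<-|HAB].
  - split; field; exact Hh.
  - replace (kinkpt m (V + A * r) A (V + A * h + B * r) B) with (h - r)
      by (unfold kinkpt; fold h; field; intro; apply HAB; lra).
    destruct (Rlt_dec 0 (h - r)); [|lra]. destruct (Rlt_dec (h - r) h); [|lra].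
    destruct (Rle_dec s (h - r)); [lra|]. split; ring.
Qed.

Lemma jet_shifted_state (c : R) : (forall K : Z, c <> IZR K * h) -> forall z,
  jetI m (shifted_state c) z = lin_interp m u0 (z + c) /\
  jetI_lderiv m (shifted_state c) z = slope_interp u0 m (z + c).
Proof.
  intros Hc z. assert (Hh := h_pos m Hm). fold h in Hh.
  destruct (cell_decomp m Hm c) as [Ec Hr]. fold h in Ec, Hr.
  set (j := cellk m c) in *. set (r := locs m c) in *.
  assert (Hr' : 0 < r < h).
  { split; [lra|]. destruct Hr as [_ [Hr|Hr]]; [exact Hr|].
    exfalso. apply (Hc (j + 1)%Z). rewrite Ec, Hr, plus_IZR. ring. }
  destruct (cell_decomp m Hm z) as [Ez Hs]. fold h in Ez, Hs.
  set (k := cellk m z) in *. set (s := locs m z) in *.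
  assert (Enode : forall K : Z,
    INR (Z.to_nat (K mod Z.of_nat m)) * h + c = IZR (K + j) * h + r + IZR (- (K / Z.of_nat m))).
  { intros K. unfold h. rewrite node_value, opp_IZR by exact Hm. fold h.
    rewrite Ec, plus_IZR. ring. }
  unfold jetI, jetI_lderiv, shifted_state, nodeL, nodeR. cbn [fst snd]. fold k s h.
  rewrite !Enode, !lin_interp_periodic, !slope_interp_periodic by (exact Hper || exact Hm).
  rewrite !lin_interp_cell, !slope_interp_cell by (exact Hper || exact Hm || fold h; lra).
  set (V := grid_val u0 m (k + j)).
  set (A := grid_slope u0 m (k + j)).
  set (B := grid_slope u0 m (k + 1 + j)).
  assert (EV : grid_val u0 m (k + 1 + j) = V + A * h).
  { unfold V, A. rewrite grid_slope_mul by exact Hm.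
    replace (k + 1 + j)%Z with (k + j + 1)%Z by ring. ring. }
  rewrite EV.
  replace (z + c) with (IZR (k + j) * h + (r + s)) by (rewrite Ez, Ec, plus_IZR; ring).
  destruct (Rle_dec (r + s) h) as [Hle|Hgt].
  - destruct (piece_before_kink V A B r s ltac:(lra) ltac:(lra) Hle) as [P1 P2].
    rewrite P1, P2, lin_interp_cell, slope_interp_cell by (exact Hper || exact Hm || fold h; lra).
    split; reflexivity.
  - destruct (piece_after_kink V A B r s ltac:(lra) ltac:(lra)) as [P1 P2].
    replace (IZR (k + j) * h + (r + s)) with (IZR (k + 1 + j) * h + (r + s - h))
      by (rewrite !plus_IZR; ring).
    rewrite P1, P2, lin_interp_cell, slope_interp_cell by (exact Hper || exact Hm || fold h; lra).
    rewrite EV. split; reflexivity.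
Qed.

Lemma jet_init_shifted (delta : R) : 0 < delta < h ->
  forall i, jet_init m u0 delta i = shifted_state delta i.
Proof.
  intros Hd i. unfold jet_init, shifted_state. fold h.
  rewrite INR_IZR_INZ, lin_interp_cell, slope_interp_cell by (exact Hper || exact Hm || fold h; lra).
  unfold grid_slope, grid_val. rewrite S_INR, INR_IZR_INZ, plus_IZR. reflexivity.
Qed.

Lemma jet_iter_shifted (mu c : R) (U0 : state) : (forall i, U0 i = shifted_state c i) ->
  (forall n (K : Z), c - INR n * mu * h <> IZR K * h) ->
  forall n i, jet_iter m mu U0 n i = shifted_state (c - INR n * mu * h) i.
Proof.
  intros H0 Hoff n. induction n as [|n IH]; intros i.
  - rewrite H0. unfold shifted_state. simpl. f_equal; f_equal; ring.
  - change (jet_iter m mu U0 (S n)) with (jet_step m mu (jet_iter m mu U0 n)).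
    unfold jet_step. fold h.
    destruct (jetI_agree _ _ (fun i _ => IH i) (INR i * h - mu * h)) as [A1 A2].
    destruct (jet_shifted_state _ (Hoff n) (INR i * h - mu * h)) as [K1 K2].
    rewrite A1, A2, K1, K2. unfold shifted_state. fold h. rewrite S_INR.
    f_equal; f_equal; ring.
Qed.

(* With mu = p/q and 0 < delta < h/q, the offsets delta - n mu h never hit the
   grid: q (delta - n mu h)/h would be an integer strictly between K q + n p
   and K q + n p + 1. *)
Lemma offset_off_grid (p q n : nat) (delta : R) (K : Z) : (0 < q)%nat ->
  0 < delta < h / INR q -> delta - INR n * (INR p / INR q) * h <> IZR K * h.
Proof.
  intros Hq Hd E. assert (Hh := h_pos m Hm). fold h in Hh.
  assert (Hq' : 0 < INR q) by (now apply lt_0_INR).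
  set (X := delta * INR q / h).
  assert (EX : X = IZR (K * Z.of_nat q + Z.of_nat n * Z.of_nat p)).
  { unfold X. rewrite plus_IZR, !mult_IZR, <- !INR_IZR_INZ.
    replace delta with (IZR K * h + INR n * (INR p / INR q) * h) by lra.
    field. lra. }
  assert (X0 : 0 < X) by (unfold X; apply Rdiv_lt_0_compat; nra).
  assert (X1 : X < 1).
  { unfold X. apply Rmult_lt_reg_r with h; [exact Hh|]. unfold Rdiv in *.
    rewrite Rmult_assoc, Rinv_l, Rmult_1_r by lra.
    destruct Hd as [_ Hd]. apply Rmult_lt_compat_r with (r := INR q) in Hd; [|exact Hq'].
    rewrite Rmult_assoc, Rinv_l in Hd by lra. lra. }
  rewrite EX in X0, X1. apply lt_IZR in X0. apply lt_IZR in X1. lia.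
Qed.

End Transport.

Section Modulus.
Variable u0 : R -> R.
Hypothesis Hcont : forall x, continuity_pt u0 x.

Definition modulus (r : R) : R := real (omega u0 r).

Lemma uniform_continuity_01 (eps : R) : 0 < eps -> exists d, 0 < d /\
  forall x y, 0 <= x <= 1 -> 0 <= y <= 1 -> Rabs (x - y) < d -> Rabs (u0 x - u0 y) < eps.
Proof.
  intros He.
  destruct (Heine u0 (fun c => 0 <= c <= 1) (compact_P3 0 1) (fun x _ => Hcont x)
              (mkposreal eps He)) as [d Hd].
  exists d. split; [apply cond_pos|]. intros; now apply Hd.
Qed.

Lemma bounded_01 : exists M, forall x, 0 <= x <= 1 -> Rabs (u0 x) <= M.
Proof.
  destruct (continuity_ab_maj u0 0 1 ltac:(lra) (fun c _ => Hcont c)) as [xM [HM _]].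
  destruct (continuity_ab_min u0 0 1 ltac:(lra) (fun c _ => Hcont c)) as [xm [Hmin _]].
  exists (Rabs (u0 xM) + Rabs (u0 xm)). intros x Hx.
  specialize (HM x Hx). specialize (Hmin x Hx).
  pose proof (Rle_abs (u0 xM)). pose proof (Rle_abs (- u0 xm)). rewrite Rabs_Ropp in *.
  pose proof (Rabs_pos (u0 xM)). pose proof (Rabs_pos (u0 xm)).
  apply Rabs_le. lra.
Qed.

Lemma omega_spec (r : R) : 0 < r ->
  omega u0 r = Finite (modulus r) /\ 0 <= modulus r /\
  (forall x y, 0 <= x <= 1 -> 0 <= y <= 1 -> Rabs (x - y) < r ->
     Rabs (u0 x - u0 y) <= modulus r) /\
  (forall B, (forall x y, 0 <= x <= 1 -> 0 <= y <= 1 -> Rabs (x - y) < r ->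
     Rabs (u0 x - u0 y) <= B) -> modulus r <= B).
Proof.
  intros Hr. unfold modulus, omega.
  set (E := fun v => exists x y, 0 <= x <= 1 /\ 0 <= y <= 1 /\
                      Rabs (x - y) < r /\ v = Rabs (u0 x - u0 y)).
  destruct (Lub_Rbar_correct E) as [ub lub]. destruct bounded_01 as [M HM].
  assert (L0 : Rbar_le 0 (Lub_Rbar E)).
  { apply ub. exists 0, 0. rewrite !Rminus_diag, Rabs_R0. repeat split; lra. }
  assert (L1 : Rbar_le (Lub_Rbar E) (M + M)).
  { apply lub. intros v [x [y [Hx [Hy [_ ->]]]]]. simpl.
    eapply Rle_trans; [apply Rabs_triang|]. rewrite Rabs_Ropp.
    pose proof (HM x Hx); pose proof (HM y Hy); lra. }
  destruct (Lub_Rbar E) as [w| |]; simpl in L0, L1; try contradiction. simpl.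
  split; [reflexivity|]. split; [exact L0|]. split.
  - intros x y Hx Hy Hxy. apply (ub (Rabs (u0 x - u0 y))). now exists x, y.
  - intros B HB. apply (lub (Finite B)). intros v [x [y [Hx [Hy [Hxy ->]]]]]. now apply HB.
Qed.

(* The bound also holds for |x - y| = r, by continuity of u0. *)
Lemma modulus_closed (r x y : R) : 0 < r -> 0 <= x <= 1 -> 0 <= y <= 1 ->
  Rabs (x - y) <= r -> Rabs (u0 x - u0 y) <= modulus r.
Proof.
  intros Hr Hx Hy Hxy. destruct (omega_spec r Hr) as [_ [_ [Wub _]]].
  apply le_epsilon. intros eps He.
  destruct (uniform_continuity_01 eps He) as [d [Hd Hud]].
  (* move x a fraction th of the way to y: the new point is strictly closer *)
  set (th := Rmin (d / (2 * r)) (1 / 2)).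
  assert (Hth : 0 < th <= 1 / 2).
  { unfold th. split; [apply Rmin_pos; [apply Rdiv_lt_0_compat|]; lra|apply Rmin_r]. }
  assert (Hthr : th * r < d).
  { apply Rle_lt_trans with (d / (2 * r) * r).
    - apply Rmult_le_compat_r; [lra|apply Rmin_l].
    - replace (d / (2 * r) * r) with (d / 2) by (field; lra). lra. }
  set (x' := x + (y - x) * th).
  assert (Hx' : 0 <= x' <= 1) by (unfold x'; nra).
  assert (A1 : Rabs (u0 x - u0 x') < eps).
  { apply Hud; auto. unfold x'.
    replace (x - (x + (y - x) * th)) with ((x - y) * th) by ring.
    rewrite Rabs_mult, (Rabs_pos_eq th) by lra. nra. }
  assert (A2 : Rabs (u0 x' - u0 y) <= modulus r).
  { apply Wub; auto. unfold x'. replace (x + (y - x) * th - y) with ((x - y) * (1 - th)) by ring.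
    rewrite Rabs_mult, (Rabs_pos_eq (1 - th)) by lra. nra. }
  replace (u0 x - u0 y) with ((u0 x - u0 x') + (u0 x' - u0 y)) by ring.
  eapply Rle_trans; [apply Rabs_triang|]. lra.
Qed.

Lemma modulus_mono (r1 r2 : R) : 0 < r1 <= r2 -> modulus r1 <= modulus r2.
Proof.
  intros Hr. destruct (omega_spec r1 ltac:(lra)) as [_ [_ [_ L1]]].
  destruct (omega_spec r2 ltac:(lra)) as [_ [_ [U2 _]]].
  apply L1. intros; apply U2; auto; lra.
Qed.

Lemma modulus_vanishes (eps : R) : 0 < eps ->
  exists r0, 0 < r0 /\ forall r, 0 < r <= r0 -> modulus r <= eps.
Proof.
  intros He. destruct (uniform_continuity_01 eps He) as [d [Hd Hud]]. exists d. split; [exact Hd|].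
  intros r Hr. destruct (omega_spec r ltac:(lra)) as [_ [_ [_ L1]]].
  apply L1. intros. left. apply Hud; auto; lra.
Qed.

End Modulus.

Lemma convex_comb_bound (tau X Y Z A B : R) : 0 <= tau <= 1 ->
  Rabs X <= A -> Rabs Y <= A -> Rabs Z <= B -> Rabs ((1 - tau) * X + tau * Y + Z) <= A + B.
Proof.
  intros Ht HX HY HZ. apply Rabs_le_between in HX. apply Rabs_le_between in HY.
  apply Rabs_le_between in HZ. apply Rabs_le. nra.
Qed.

Lemma convex_comb_bound_skewed (tau X Y A B : R) : 0 <= tau <= 1 / 2 ->
  Rabs X <= B -> Rabs Y <= A + 2 * B -> B <= A -> 0 <= B ->
  Rabs ((1 - tau) * X + tau * Y) <= A + B.
Proof.
  intros Ht HX HY HBA HB. apply Rabs_le_between in HX. apply Rabs_le_between in HY.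
  apply Rabs_le. nra.
Qed.

Lemma abs_lin_comb_le (A B s t e : R) : 0 <= s <= e -> 0 <= t <= e ->
  Rabs (A * s + B * t) <= (Rabs A + Rabs B) * e.
Proof.
  intros Hs Ht. eapply Rle_trans; [apply Rabs_triang|].
  rewrite !Rabs_mult, (Rabs_pos_eq s), (Rabs_pos_eq t) by lra.
  pose proof (Rabs_pos A); pose proof (Rabs_pos B). nra.
Qed.

Section InterpolationError.
Variable u0 : R -> R.
Hypothesis Hper : forall x, u0 (x + 1) = u0 x.
Hypothesis Hcont : forall x, continuity_pt u0 x.
Variable m : nat.
Hypothesis Hm : (0 < m)%nat.
Let h := / INR m.

(* Near y, I is Lipschitz with the constant |slope of the cell of y| +
   |slope of the next cell|. *)
Lemma lin_interp_loc_lipschitz (y : R) : exists C d, 0 < d /\ forall y2, Rabs (y2 - y) < d ->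
  Rabs (lin_interp m u0 y2 - lin_interp m u0 y) <= C * Rabs (y2 - y).
Proof.
  destruct (cell_decomp m Hm y) as [Ey Ht]. fold h in Ey, Ht.
  set (K := cellk m y) in *. set (t := locs m y) in *.
  set (A := grid_slope u0 m K). set (B := grid_slope u0 m (K + 1)).
  exists (Rabs A + Rabs B), t. split; [lra|].
  intros y2 Hy2. apply Rabs_def2 in Hy2.
  rewrite Ey, lin_interp_cell by (exact Hper || exact Hm || fold h; lra). fold A.
  pose proof (Rabs_pos A). pose proof (Rabs_pos B).
  destruct (Rle_dec y2 (IZR (K + 1) * h)) as [H1|H1]; rewrite plus_IZR in H1.
  - replace y2 with (IZR K * h + (y2 - IZR K * h)) at 1 by ring.
    rewrite lin_interp_cell by (exact Hper || exact Hm || fold h; lra). fold A.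
    replace (grid_val u0 m K + A * (y2 - IZR K * h) - (grid_val u0 m K + A * t))
      with (A * (y2 - (IZR K * h + t))) by ring.
    rewrite Rabs_mult. pose proof (Rabs_pos (y2 - (IZR K * h + t))). nra.
  - replace y2 with (IZR (K + 1) * h + (y2 - (IZR K + 1) * h)) at 1 by (rewrite plus_IZR; ring).
    rewrite lin_interp_cell by (exact Hper || exact Hm || fold h; lra). fold B.
    replace (grid_val u0 m (K + 1)) with (grid_val u0 m K + A * h)
      by (unfold A; rewrite grid_slope_mul by exact Hm; ring).
    replace (grid_val u0 m K + A * h + B * (y2 - (IZR K + 1) * h) - (grid_val u0 m K + A * t))
      with (A * (h - t) + B * (y2 - (IZR K + 1) * h)) by ring.
    rewrite (Rabs_pos_eq (y2 - _)) by lra. apply abs_lin_comb_le; lra.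
Qed.

Lemma lin_interp_continuous (y : R) : continuity_pt (lin_interp m u0) y.
Proof.
  destruct (lin_interp_loc_lipschitz y) as [C [d [Hd HL]]].
  intros eps He. pose proof (Rabs_pos C).
  exists (Rmin d (eps / (Rabs C + 1))). split.
  { apply Rmin_pos; [exact Hd|]. apply Rdiv_lt_0_compat; lra. }
  intros x [_ Hx]. simpl in *. unfold R_dist in *.
  assert (Hx1 : Rabs (x - y) < d) by (eapply Rlt_le_trans; [apply Hx|apply Rmin_l]).
  assert (Hx2 : Rabs (x - y) < eps / (Rabs C + 1)) by (eapply Rlt_le_trans; [apply Hx|apply Rmin_r]).
  specialize (HL x Hx1). pose proof (Rle_abs C). pose proof (Rabs_pos (x - y)).
  apply Rmult_lt_compat_r with (r := Rabs C + 1) in Hx2; [|lra].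
  replace (eps / (Rabs C + 1) * (Rabs C + 1)) with eps in Hx2 by (field; lra). nra.
Qed.

Lemma error_integrand_continuous (d e x : R) :
  continuous (fun x => Rabs (lin_interp m u0 (x - e + d) - u0 (x - e))) x.
Proof.
  assert (Hshift : forall c, continuous (fun x : R => x - e + c) x).
  { intros c. apply continuity_pt_filterlim. reg. }
  assert (C1 : continuous (fun x => lin_interp m u0 (x - e + d)) x).
  { apply (continuous_comp (fun x => x - e + d) (lin_interp m u0)); [apply Hshift|].
    apply continuity_pt_filterlim, lin_interp_continuous. }
  assert (C2 : continuous (fun x => u0 (x - e)) x).
  { eapply continuous_ext; [|apply (continuous_comp (fun x => x - e + 0) u0)].
    - intros z. simpl. now rewrite Rplus_0_r.
    - apply Hshift.
    - apply continuity_pt_filterlim, Hcont. }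
  apply continuous_Rabs_comp. exact (continuous_minus _ _ x C1 C2).
Qed.

Variable d : R.
Hypothesis Hd : 0 < d < h / 2.

(* Case y + d in (0,1]: I(y + d) is a convex combination of the two nodal
   values around y + d, each within omega(h) of u0(y + d). *)
Lemma interp_error_unwrapped (y : R) : 0 <= y -> y + d <= 1 ->
  Rabs (lin_interp m u0 (y + d) - u0 y) <= modulus u0 h + modulus u0 d.
Proof.
  intros Hy0 Hy1. assert (Hh := h_pos m Hm). fold h in Hh.
  set (z := y + d). destruct (cell_decomp m Hm z) as [Ez Ht]. fold h in Ez, Ht.
  destruct (cell_within_01 m Hm z ltac:(unfold z; lra)) as [HK0 HK1]. fold h in HK0, HK1.
  set (K := cellk m z) in *. set (t := locs m z) in *. rewrite plus_IZR in HK1.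
  rewrite Ez, lin_interp_cell by (exact Hper || exact Hm || fold h; lra).
  unfold grid_slope, grid_val. fold h. rewrite plus_IZR.
  set (tau := t / h).
  replace (u0 (IZR K * h) + (u0 ((IZR K + 1) * h) - u0 (IZR K * h)) / h * t - u0 y)
    with ((1 - tau) * (u0 (IZR K * h) - u0 z) + tau * (u0 ((IZR K + 1) * h) - u0 z)
          + (u0 z - u0 y)) by (unfold tau; field; lra).
  apply convex_comb_bound.
  - unfold tau. split; [apply Rdiv_le_0_compat; lra|].
    apply Rmult_le_reg_r with h; [exact Hh|]. unfold Rdiv. rewrite Rmult_assoc, Rinv_l; lra.
  - apply modulus_closed; try (exact Hcont || lra). rewrite Rabs_left1; lra.
  - apply modulus_closed; try (exact Hcont || lra). rewrite Rabs_pos_eq; lra.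
  - apply modulus_closed; try (exact Hcont || lra). unfold z. rewrite Rabs_pos_eq; lra.
Qed.

(* Case y + d > 1: I(y + d) = I(y + d - 1) interpolates u0(0) = u0(1) and
   u0(h) with weight at most 1/2 on u0(h), and u0(1) is within omega(d) of
   u0(y). *)
Lemma interp_error_wrapped (y : R) : y < 1 -> 1 < y + d ->
  Rabs (lin_interp m u0 (y + d) - u0 y) <= modulus u0 h + modulus u0 d.
Proof.
  intros Hy0 Hy1. assert (Hh := h_pos m Hm). fold h in Hh. assert (H1 := h_le_1 m Hm). fold h in H1.
  assert (Wdh : modulus u0 d <= modulus u0 h) by (apply modulus_mono; [exact Hcont|lra]).
  destruct (omega_spec u0 Hcont d ltac:(lra)) as [_ [W0 _]].
  set (z := y + d - 1).
  replace (y + d) with (IZR 0 * h + z + IZR 1) by (unfold z; simpl; ring).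
  rewrite lin_interp_periodic, lin_interp_cell by (exact Hper || exact Hm || unfold z; fold h; lra).
  unfold grid_slope, grid_val. fold h. simpl (IZR (0 + 1)). rewrite Rmult_0_l, Rmult_1_l.
  set (tau := z / h).
  replace (u0 0 + (u0 h - u0 0) / h * z - u0 y)
    with ((1 - tau) * (u0 1 - u0 y)
          + tau * ((u0 h - u0 z) + (u0 z - u0 0) + (u0 1 - u0 y)))
    by (unfold tau; rewrite <- (Hper 0), Rplus_0_l; field; lra).
  assert (Bh : Rabs (u0 h - u0 z) <= modulus u0 h)
    by (apply modulus_closed; try (exact Hcont || unfold z; lra); rewrite Rabs_pos_eq; unfold z; lra).
  assert (Bz : Rabs (u0 z - u0 0) <= modulus u0 d)
    by (apply modulus_closed; try (exact Hcont || unfold z; lra); rewrite Rabs_pos_eq; unfold z; lra).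
  assert (By : Rabs (u0 1 - u0 y) <= modulus u0 d)
    by (apply modulus_closed; try (exact Hcont || lra); rewrite Rabs_pos_eq; lra).
  apply convex_comb_bound_skewed; try lra.
  - unfold tau. split; [apply Rdiv_le_0_compat; unfold z; lra|].
    apply Rmult_le_reg_r with h; [exact Hh|]. unfold Rdiv. rewrite Rmult_assoc, Rinv_l; unfold z; lra.
  - eapply Rle_trans; [apply Rabs_triang|].
    eapply Rle_trans; [apply Rplus_le_compat_r, Rabs_triang|]. lra.
Qed.

Lemma translated_interp_error (y : R) :
  Rabs (lin_interp m u0 (y + d) - u0 y) <= modulus u0 h + modulus u0 d.
Proof.
  set (y' := y - IZR (up y - 1)).
  assert (Hy' : 0 <= y' < 1) by (destruct (archimed y); unfold y'; rewrite minus_IZR; lra).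
  replace (y + d) with ((y' + d) + IZR (up y - 1)) by (unfold y'; ring).
  rewrite lin_interp_periodic by (exact Hper || exact Hm).
  replace (u0 y) with (u0 y')
    by (unfold y', Rminus; rewrite <- opp_IZR; now apply periodic_int).
  destruct (Rle_dec (y' + d) 1).
  - apply interp_error_unwrapped; lra.
  - apply interp_error_wrapped; lra.
Qed.

End InterpolationError.

Section JetError.
Variables (a : R) (p q : nat) (u0 : R -> R).
Hypothesis Ha : 0 < a.
Hypothesis Hp : (0 < p)%nat.
Hypothesis Hpq : (p < q)%nat.
Hypothesis Hper : forall x, u0 (x + 1) = u0 x.
Hypothesis Hcont : forall x, continuity_pt u0 x.
Variable m : nat.
Hypothesis Hm : (0 < m)%nat.
Variable delta : R.
Hypothesis Hdelta : 0 < delta < / INR m / INR q.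
Let h := / INR m.
Let mu := INR p / INR q.

(* since q >= 2, the shift delta is less than half a cell *)
Lemma delta_half_cell : 0 < delta < h / 2.
Proof.
  assert (Hh := h_pos m Hm). fold h in Hh, Hdelta.
  assert (Hq : 2 <= INR q) by (apply (le_INR 2); lia).
  split; [lra|]. apply Rlt_le_trans with (h / INR q); [apply Hdelta|].
  unfold Rdiv. apply Rmult_le_compat_l; [lra|]. apply Rinv_le_contravar; lra.
Qed.

Lemma jet_exact_transport (n : nat) (x : R) :
  jetI m (jet_iter m mu (jet_init m u0 delta) n) x
  = lin_interp m u0 (x + (delta - INR n * mu * h)).
Proof.
  assert (Hd := delta_half_cell). fold h in Hd.
  assert (Hoff : forall n (K : Z), delta - INR n * mu * h <> IZR K * h)
    by (intros k K; apply offset_off_grid; (exact Hm || lia || exact Hdelta)).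
  assert (Hiter := jet_iter_shifted u0 Hper m Hm mu delta _
                     (jet_init_shifted u0 Hper m Hm delta ltac:(fold h; lra)) Hoff n).
  destruct (jetI_agree m Hm _ _ (fun i _ => Hiter i) x) as [A _]. rewrite A.
  apply (jet_shifted_state u0 Hper m Hm _ (Hoff n) x).
Qed.

Lemma jet_init_interp (x : R) : jetI m (jet_init m u0 delta) x = lin_interp m u0 (x + delta).
Proof.
  change (jet_init m u0 delta) with (jet_iter m mu (jet_init m u0 delta) 0).
  rewrite jet_exact_transport. f_equal. simpl. ring.
Qed.

Lemma jet_iter_translate (n : nat) (x : R) :
  jetI m (jet_iter m mu (jet_init m u0 delta) n) x
  = jetI m (jet_init m u0 delta) (frac (x - INR n * mu * h)).
Proof.
  rewrite jet_exact_transport, jet_init_interp. unfold frac.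
  rewrite <- (lin_interp_periodic u0 Hper m Hm _ (- (up (x - INR n * mu * h) - 1))).
  f_equal. rewrite opp_IZR. ring.
Qed.

Lemma jet_err_bound (n : nat) :
  0 <= jet_err a mu u0 delta m n <= modulus u0 h + modulus u0 delta.
Proof.
  set (e := INR n * mu * h).
  set (F := fun x => Rabs (lin_interp m u0 (x - e + delta) - u0 (x - e))).
  assert (EI : jet_err a mu u0 delta m n = RInt F 0 1).
  { unfold jet_err. apply RInt_ext. intros x _. rewrite jet_exact_transport.
    unfold F, exact_sol, frac. fold h.
    replace (x - a * (INR n * (mu * h / a))) with (x - e)
      by (unfold e; field; lra).
    replace (x - e - IZR (up (x - e) - 1)) with ((x - e) + IZR (- (up (x - e) - 1)))
      by (rewrite opp_IZR; ring).
    rewrite periodic_int by exact Hper. unfold e. f_equal. f_equal. f_equal. ring. }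
  assert (Ex : ex_RInt F 0 1).
  { apply (@ex_RInt_continuous R_CompleteNormedModule). intros z _.
    apply error_integrand_continuous; assumption. }
  rewrite EI. split.
  - apply RInt_ge_0; [lra|exact Ex|]. intros; apply Rabs_pos.
  - eapply Rle_trans.
    + apply (RInt_le F (fun _ => modulus u0 h + modulus u0 delta)); [lra|exact Ex|apply ex_RInt_const|].
      intros x _. unfold F. replace (x - e + delta) with ((x - e) + delta) by ring.
      apply translated_interp_error; (exact Hper || exact Hcont || exact Hm || exact delta_half_cell).
    + rewrite RInt_const. unfold scal; simpl. unfold mult; simpl. right; ring.
Qed.

End JetError.

Lemma grid_spacing_small (r0 : R) : 0 < r0 ->
  exists M : nat, forall m, (0 < m)%nat -> (M <= m)%nat -> / INR m <= r0.
Proof.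
  intros Hr0. destruct (archimed_cor1 r0 Hr0) as [M [HM HM0]]. exists M.
  intros m Hm HMm. apply Rle_trans with (/ INR M); [|lra].
  apply Rinv_le_contravar; [now apply lt_0_INR|now apply le_INR].
Qed.

Lemma LimSup_abs_lt (u : nat -> R) (c eps : R) :
  (forall n, 0 <= u n <= c) -> c < eps -> Rbar_lt (Rbar_abs (LimSup_seq u)) eps.
Proof.
  intros Hu Hce.
  assert (L1 : Rbar_le (LimSup_seq u) (LimSup_seq (fun _ => c)))
    by (apply LimSup_le; exists 0%nat; intros n _; apply Hu).
  assert (L0 : Rbar_le (LimSup_seq (fun _ => 0)) (LimSup_seq u))
    by (apply LimSup_le; exists 0%nat; intros n _; apply Hu).
  rewrite LimSup_seq_const in L1, L0.
  destruct (LimSup_seq u) as [l| |]; simpl in *; try contradiction.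
  rewrite Rabs_pos_eq; lra.
Qed.

Lemma jet_err_uniformly_small (a : R) (p q : nat) (u0 : R -> R) (delta : nat -> R)
  (Ha : 0 < a) (Hp : (0 < p)%nat) (Hpq : (p < q)%nat)
  (Hper : forall x, u0 (x + 1) = u0 x) (Hcont : forall x, continuity_pt u0 x)
  (Hdelta : forall m, admissible (INR p / INR q) m -> 0 < delta m < / INR m / INR q)
  (eps : R) : 0 < eps ->
  exists M : nat, forall m, admissible (INR p / INR q) m -> (M <= m)%nat ->
    forall n, 0 <= jet_err a (INR p / INR q) u0 (delta m) m n <= eps / 2.
Proof.
  intros He. destruct (modulus_vanishes u0 Hcont (eps / 4) ltac:(lra)) as [r0 [Hr0 Hsmall]].
  destruct (grid_spacing_small r0 Hr0) as [M HM]. exists M. intros m Hadm HMm n.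
  assert (Hm : (0 < m)%nat) by apply Hadm.
  assert (Hd := delta_half_cell p q Hp Hpq m Hm (delta m) (Hdelta m Hadm)).
  assert (Hh := h_pos m Hm). specialize (HM m Hm HMm).
  assert (Wh : modulus u0 (/ INR m) <= eps / 4) by (apply Hsmall; lra).
  assert (Wd : modulus u0 (delta m) <= modulus u0 (/ INR m))
    by (apply modulus_mono; [exact Hcont|lra]).
  pose proof (jet_err_bound a p q u0 Ha Hp Hpq Hper Hcont m Hm (delta m) (Hdelta m Hadm) n).
  lra.
Qed.

Theorem mainTheorem4
  (a : R) (p q : nat) (u0 : R -> R) (delta : nat -> R)
  (Ha : 0 < a)
  (Hp : (0 < p)%nat) (Hpq : (p < q)%nat) (Hcop : Nat.gcd p q = 1%nat)
  (Hcont : forall x, continuity_pt u0 x)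
  (Hper : forall x, u0 (x + 1) = u0 x)
  (Hdelta : forall m, admissible (INR p / INR q) m ->
            0 < delta m < (/ INR m) / INR q) :
  let mu := INR p / INR q in
  (forall m, admissible mu m ->
     (forall x, jetI m (jet_init m u0 (delta m)) x
                = lin_interp m u0 (x + delta m))
     /\ (forall n x, jetI m (jet_iter m mu (jet_init m u0 (delta m)) n) x
                = jetI m (jet_init m u0 (delta m))
                       (frac (x - INR n * mu * / INR m)))
     /\ (forall n, Rbar_le (Finite (jet_err a mu u0 (delta m) m n))
                     (Rbar_plus (omega u0 (/ INR m)) (omega u0 (delta m)))))
  /\
  (forall eps, 0 < eps -> exists M : nat, forall m, admissible mu m -> (M <= m)%nat ->
     Rbar_lt (Rbar_abs (LimSup_seq (fun n => jet_err a mu u0 (delta m) m n)))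
             (Finite eps))
  /\
  (exists L : nat -> R,
     (forall n eps, 0 < eps -> exists M : nat, forall m, admissible mu m -> (M <= m)%nat ->
        Rabs (jet_err a mu u0 (delta m) m n - L n) < eps)
     /\ LimSup_seq L = Finite 0).
Proof.
  intros mu. split; [|split].
  -
    intros m Hadm. assert (Hm : (0 < m)%nat) by apply Hadm.
    assert (Hd := delta_half_cell p q Hp Hpq m Hm (delta m) (Hdelta m Hadm)).
    assert (Hh := h_pos m Hm).
    split; [|split].
    + apply (jet_init_interp p q); auto.
    + apply (jet_iter_translate p q); auto.
    + intros n. destruct (omega_spec u0 Hcont (/ INR m) Hh) as [-> _].
      destruct (omega_spec u0 Hcont (delta m) ltac:(lra)) as [-> _].
      apply (jet_err_bound a p q u0 Ha Hp Hpq Hper Hcont m Hm (delta m) (Hdelta m Hadm) n).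
  - (* lim_(h -> 0) limsup_(n -> oo) of the error vanishes *)
    intros eps He. destruct (jet_err_uniformly_small a p q u0 delta Ha Hp Hpq Hper Hcont
                               Hdelta eps He) as [M HM].
    exists M. intros m Hadm HMm. apply (LimSup_abs_lt _ (eps / 2)); [|lra].
    exact (HM m Hadm HMm).
  - (* for each fixed n the error tends to 0 as h -> 0 *)
    exists (fun _ => 0). split; [|apply LimSup_seq_const].
    intros n eps He. destruct (jet_err_uniformly_small a p q u0 delta Ha Hp Hpq Hper Hcont
                                 Hdelta eps He) as [M HM].
    exists M. intros m Hadm HMm. specialize (HM m Hadm HMm n). fold mu in HM.
    rewrite Rminus_0_r, Rabs_pos_eq; lra.
Qed.
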